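(* Let $G$ be a graph without isolated vertices. (i) If $f=(V_0,V_1,V_2)$ is any $\gamma_R(G)$-function, then $\gamma_{qtR}(G)\le \gamma_R(G)+|V_2|$. (ii) If $f'=(V'_0,V'_1,V'_2)$ is any $\gamma_{qtR}(G)$-function, then $\gamma_{tR}(G)\le \gamma_{qtR}(G)+|V'_1|$.
   Context: All graphs are finite, simple and undirected. For a function $f:V(G)\to\{0,1,2\}$ write $V_i=\{v: f(v)=i\}$ and identify $f$ with $(V_0,V_1,V_2)$; its weight is $\omega(f)=\sum_{v}f(v)=|V_1|+2|V_2|$. A Roman dominating function (RDF) is such an $f$ in which every vertex with label $0$ has a neighbor with label $2$; $\gamma_R(G)$ is the minimum weight of an RDF. A total Roman dominating function (TRDF) on a graph without isolated vertices is an RDF such that the subgraph induced by $V_1\cup V_2$ has no isolated vertices; $\gamma_{tR}(G)$ is the minimum weight of a TRDF. A quasi-total Roman dominating function (QTRDF) is an $f:V(G)\to\{0,1,2\}$ such that every vertex with label $0$ is adjacent to a vertex with label $2$, and every vertex that is isolated in the subgraph induced by $V_1\cup V_2$ has label $1$; $\gamma_{qtR}(G)$ is the minimum weight of a QTRDF. A $\gamma_R(G)$-function (resp. $\gamma_{qtR}(G)$-function) is an RDF (resp. QTRDF) of minimum weight. *)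

From mathcomp Require Import all_boot.
Set Implicit Arguments. Unset Strict Implicit. Unset Printing Implicit Defensive.

Definition simple_graph (T : finType) (e : rel T) : Prop :=
  symmetric e /\ irreflexive e.

Definition no_isolated (T : finType) (e : rel T) : Prop :=
  forall v : T, exists u : T, e v u.

Definition lab (T : finType) := {ffun T -> 'I_3}.

Definition Vi (T : finType) (f : lab T) (i : nat) : {set T} :=
  [set v | nat_of_ord (f v) == i].

Definition weight (T : finType) (f : lab T) : nat := \sum_(v : T) nat_of_ord (f v).

Definition is_RDF (T : finType) (e : rel T) (f : lab T) : bool :=
  [forall v, (nat_of_ord (f v) == 0) ==> [exists u, e v u && (nat_of_ord (f u) == 2)]].

Definition isolated_in_pos (T : finType) (e : rel T) (f : lab T) (v : T) : bool :=
  (0 < f v) && ~~ [exists u, e v u && (0 < f u)].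

Definition is_TRDF (T : finType) (e : rel T) (f : lab T) : bool :=
  is_RDF e f && [forall v, ~~ isolated_in_pos e f v].

Definition is_QTRDF (T : finType) (e : rel T) (f : lab T) : bool :=
  is_RDF e f && [forall v, isolated_in_pos e f v ==> (nat_of_ord (f v) == 1)].

(* minimum weight over all labelings satisfying P; 2|T| is an upper bound
   attained by the constant-2 labeling, which satisfies all three notions
   when G has no isolated vertices *)
Definition min_weight (T : finType) (P : pred (lab T)) : nat :=
  \big[minn/(2 * #|T|)]_(f : lab T | P f) weight f.

Definition gammaR (T : finType) (e : rel T) : nat := min_weight (is_RDF e).
Definition gammatR (T : finType) (e : rel T) : nat := min_weight (is_TRDF e).
Definition gammaqtR (T : finType) (e : rel T) : nat := min_weight (is_QTRDF e).

(* Raising to 1 the 0-labelled vertices of a set S keeps a Roman dominating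
   function Roman dominating and costs at most |S|.  Starting from an RDF f,
   raise one chosen neighbour of every vertex of V_2: afterwards no vertex of
   V_2 is isolated among the positive vertices, and every other positive
   vertex has label 1, so the result is quasi-total.  Starting from a QTRDF,
   raise one chosen neighbour of every vertex of V_1: the vertices of V_1 and
   the raised vertices now have positive neighbours, while the vertices of V_2
   already had one, so the result is total. *)

From HB Require Import structures.
From mathcomp Require Import all_boot.
Set Implicit Arguments. Unset Strict Implicit. Unset Printing Implicit Defensive.

(* [minn] has no neutral element in [nat], but commutativity and
   associativity suffice for [bigD1]. *)
HB.instance Definition _ := SemiGroup.isComLaw.Build nat minn minnA minnC.

Lemma min_weight_le (T : finType) (P : pred (lab T)) (g : lab T) :
  P g -> min_weight P <= weight g.
Proof. by move=> Pg; rewrite /min_weight (bigD1 g) //= geq_minl. Qed.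

Section RaiseZeros.

Variables (T : finType) (e : rel T).
Implicit Types (f g : lab T) (S : {set T}) (u v : T).

Definition raise_zeros f S : lab T :=
  [ffun u => if (u \in S) && (f u == 0 :> nat) then inord 1 else f u].

Lemma weight_raise_zeros f S : weight (raise_zeros f S) <= weight f + #|S|.
Proof.
rewrite /weight -sum1_card [X in _ + X]big_mkcond -big_split /=.
apply: leq_sum => u _; rewrite ffunE.
by case: ifP => [/andP[-> /eqP ->] | _]; rewrite ?inordK ?leq_addr.
Qed.

Lemma raise_zeros_pos f S u : 0 < f u -> raise_zeros f S u = f u.
Proof. by rewrite ffunE lt0n => /negbTE ->; rewrite andbF. Qed.

Lemma raise_zeros_gt0 f S u : u \in S -> 0 < raise_zeros f S u.
Proof.
move=> Su; rewrite ffunE Su /=.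
by case: eqP => [_ | /eqP]; rewrite ?inordK // lt0n.
Qed.

Lemma raise_zeros_le1 f S u : f u <= 1 -> raise_zeros f S u <= 1.
Proof. by rewrite ffunE; case: ifP; rewrite ?inordK. Qed.

Lemma raise_zeros_notin f S u : u \notin S -> raise_zeros f S u = f u.
Proof. by rewrite ffunE => /negbTE ->. Qed.

Lemma RDF_raise_zeros f S : is_RDF e f -> is_RDF e (raise_zeros f S).
Proof.
move=> /forallP RDFf; apply/forallP => v; apply/implyP => gv0.
have S'v : v \notin S by apply: contraL gv0 => Sv; rewrite -lt0n raise_zeros_gt0.
move: gv0; rewrite raise_zeros_notin // => /(implyP (RDFf v)).
case/existsP=> u /andP[evu /eqP fu2].
by apply/existsP; exists u; rewrite evu raise_zeros_pos fu2.
Qed.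

Lemma isolated_in_posN g v :
  ~~ isolated_in_pos e g v = (0 < g v) ==> [exists u, e v u && (0 < g u)].
Proof. by rewrite /isolated_in_pos negb_and negbK implybE. Qed.

Definition neighbor v : T := odflt v [pick u | e v u].

Lemma neighborP v : no_isolated e -> e v (neighbor v).
Proof.
rewrite /neighbor => noiso; case: pickP => [// | none].
by have [u] := noiso v; rewrite none.
Qed.

Definition raise_neighbors f (i : nat) : lab T := raise_zeros f (neighbor @: Vi f i).

Lemma weight_raise_neighbors f i :
  weight (raise_neighbors f i) <= weight f + #|Vi f i|.
Proof.
apply: leq_trans (weight_raise_zeros _ _) _.
by rewrite leq_add2l leq_imset_card.
Qed.

Lemma raise_neighbors_neighbor_gt0 f i v :
  f v = i :> nat -> 0 < raise_neighbors f i (neighbor v).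
Proof. by move=> fv; apply/raise_zeros_gt0/imset_f; rewrite inE fv. Qed.

Hypothesis noiso : no_isolated e.

Lemma QTRDF_raise_neighbors2 f : is_RDF e f -> is_QTRDF e (raise_neighbors f 2).
Proof.
move=> RDFf; rewrite /is_QTRDF RDF_raise_zeros //=.
apply/forallP => v; apply/implyP => /andP[gv_gt0 /existsP isolated].
have [fv2 | fv_ne2] := eqVneq (f v : nat) 2.
  by case: isolated; exists (neighbor v); rewrite neighborP // raise_neighbors_neighbor_gt0.
have fv_le1 : f v <= 1 by move: fv_ne2 (ltn_ord (f v)); case: (f v : nat) => [|[|[]]].
by rewrite eqn_leq gv_gt0 raise_zeros_le1.
Qed.

Lemma TRDF_raise_neighbors1 f :
  symmetric e -> is_QTRDF e f -> is_TRDF e (raise_neighbors f 1).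
Proof.
move=> esym /andP[RDFf /forallP QTf]; rewrite /is_TRDF RDF_raise_zeros //=.
apply/forallP => v; rewrite isolated_in_posN; apply/implyP => gv_gt0.
case fv: (f v : nat) (ltn_ord (f v)) => [|[|[|]]] // _.
- have : v \in neighbor @: Vi f 1.
    by apply: contraLR gv_gt0 => /raise_zeros_notin ->; rewrite fv.
  case/imsetP=> w; rewrite inE => /eqP fw ->.
  by apply/existsP; exists w; rewrite esym neighborP // raise_zeros_pos fw.
- by apply/existsP; exists (neighbor v); rewrite neighborP // raise_neighbors_neighbor_gt0.
- have := QTf v; rewrite fv implybF isolated_in_posN fv => /existsP[u /andP[evu fu]].
  by apply/existsP; exists u; rewrite evu raise_zeros_pos.
Qed.

End RaiseZeros.

Theorem mainTheorem1 (T : finType) (e : rel T) :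
  simple_graph e -> no_isolated e ->
  (forall f : lab T, is_RDF e f -> weight f = gammaR e ->
     gammaqtR e <= gammaR e + #|Vi f 2|) /\
  (forall f' : lab T, is_QTRDF e f' -> weight f' = gammaqtR e ->
     gammatR e <= gammaqtR e + #|Vi f' 1|).
Proof.
move=> [esym _] noiso; split=> [f RDFf | f QTRDFf] <-.
- apply: leq_trans (min_weight_le (QTRDF_raise_neighbors2 noiso RDFf)) _.
  exact: weight_raise_neighbors.
- apply: leq_trans (min_weight_le (TRDF_raise_neighbors1 noiso esym QTRDFf)) _.
  exact: weight_raise_neighbors.
Qed.
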